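(* Let $\mathcal W$ be a monotonic game on $[n]$, $i\neq j$ players, and $\hat{\mathcal W}$ the game obtained by imposing a symmetric weak quarrel between $i$ and $j$. Then the Shapley–Shubik index satisfies $\hat\psi^{SS}_i\le\psi^{SS}_i$ and $\hat\psi^{SS}_j\le\psi^{SS}_j$, where $\psi^{SS}$ and $\hat\psi^{SS}$ denote the index computed in $\mathcal W$ and $\hat{\mathcal W}$ respectively.
   Context: Players are $[n]=\{1,\dots,n\}$. A binary voting game on $[n]$ is identified with its collection $\mathcal W\subseteq 2^{[n]}$ of winning sets ($S\in\mathcal W$ means the division in which exactly the members of $S$ vote YES has outcome YES). It is monotonic if $T\subseteq S$ and $T\in\mathcal W$ imply $S\in\mathcal W$. Player $i$ is YES-decisive for $S$ in a game $\mathcal W$ if $i\in S$, $S\in\mathcal W$ and $S\setminus\{i\}\notin\mathcal W$. Symmetric weak quarrel between $i$ and $j$: for every $S\subseteq[n]\setminus\{i,j\}$, $S\cup\{i,j\}\in\hat{\mathcal W}\iff (S\cup\{i\}\in\mathcal W\text{ or }S\cup\{j\}\in\mathcal W)$; $S\in\hat{\mathcal W}\iff (S\cup\{i\}\in\mathcal W\text{ and }S\cup\{j\}\in\mathcal W)$; $S\cup\{i\}\in\hat{\mathcal W}\iff S\cup\{i\}\in\mathcal W$; $S\cup\{j\}\in\hat{\mathcal W}\iff S\cup\{j\}\in\mathcal W$. Shapley–Shubik index: for an ordering $\sigma=(\sigma_1,\dots,\sigma_n)$ of $[n]$, player $i$ is pivotal in $\sigma$ if $\sigma_k=i$ and $i$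 is YES-decisive for $\{\sigma_1,\dots,\sigma_k\}$; then $\psi^{SS}_i=\frac{1}{n!}\#\{\sigma: i\text{ is pivotal in }\sigma\}$. *)

From mathcomp Require Import all_boot all_order all_algebra all_fingroup.
Set Implicit Arguments. Unset Strict Implicit. Unset Printing Implicit Defensive.
Import GRing.Theory Num.Theory.

(* A binary voting game on players 'I_n (= [n], shifted to 0..n-1) is its set
   of winning coalitions. *)
Definition game (n : nat) := {set {set 'I_n}}.

Definition monotonic n (W : game n) : Prop :=
  forall S T : {set 'I_n}, T \subset S -> T \in W -> S \in W.

Definition yes_decisive n (W : game n) (i : 'I_n) (S : {set 'I_n}) : bool :=
  [&& i \in S, S \in W & (S :\ i) \notin W].

Definition sym_weak_quarrel n (W What : game n) (i j : 'I_n) : Prop :=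
  forall S : {set 'I_n}, i \notin S -> j \notin S ->
    [/\ (i |: (j |: S) \in What) = ((i |: S \in W) || (j |: S \in W)),
        (S \in What) = ((i |: S \in W) && (j |: S \in W)),
        (i |: S \in What) = (i |: S \in W) &
        (j |: S \in What) = (j |: S \in W)].

(* For an ordering sigma (a permutation; sigma k = the player in position k),
   the set of players up to and including position k. *)
Definition predecessors n (sigma : {perm 'I_n}) (k : 'I_n) : {set 'I_n} :=
  [set sigma l | l : 'I_n & l <= k].

Definition pivotal n (W : game n) (sigma : {perm 'I_n}) (i : 'I_n) : bool :=
  [exists k : 'I_n, (sigma k == i) && yes_decisive W i (predecessors sigma k)].

Definition shapley_shubik n (W : game n) (i : 'I_n) : rat :=
  ((#|[set sigma : {perm 'I_n} | pivotal W sigma i]|)%:R / (n`!)%:R)%R.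

From mathcomp Require Import all_boot all_order all_algebra all_fingroup.
Import GRing.Theory Num.Theory.
Local Open Scope ring_scope.

(* The Shapley-Shubik index of i counts the orderings in which i is
   YES-decisive for its predecessors, so it suffices that i stays decisive in
   W wherever it is decisive after the quarrel.  For a coalition i + S with j
   outside S, decisiveness after the quarrel means i + S wins and j + S loses,
   so S loses by monotonicity.  For i + j + S it means j + S loses, so i + S
   wins, hence so does i + j + S. *)

Lemma sym_weak_quarrelC {n} {W What : game n} {i j} :
  sym_weak_quarrel W What i j -> sym_weak_quarrel W What j i.
Proof.
move=> quarrel S jS iS; have [Uij U0 Ui Uj] := quarrel S iS jS.
by split=> //; [rewrite setUCA Uij orbC | rewrite U0 andbC].
Qed.

Lemma shapley_shubik_le n (W W' : game n) i :
  (forall S, yes_decisive W' i S -> yes_decisive W i S) ->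
  shapley_shubik W' i <= shapley_shubik W i.
Proof.
move=> decW'W; rewrite /shapley_shubik ler_wpM2r ?invr_ge0 ?ler0n // ler_nat.
apply/subset_leq_card/subsetP => sigma; rewrite !inE.
case/existsP => k /andP[sigma_k dec]; apply/existsP; exists k.
by rewrite sigma_k decW'W.
Qed.

Section SymmetricWeakQuarrel.

Variables (n : nat) (W What : game n) (i j : 'I_n).
Hypotheses (monW : monotonic W) (neq_ij : i != j)
  (quarrel : sym_weak_quarrel W What i j).

Lemma yes_decisive_quarrel_setU1 (S : {set 'I_n}) :
  i \notin S -> j \notin S ->
  yes_decisive What i (i |: S) -> yes_decisive W i (i |: S).
Proof.
move=> iS jS; have [_ U0 Ui _] := quarrel S iS jS.
rewrite /yes_decisive setU11 setU1K // U0 Ui /= => /andP[iSW].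
rewrite iSW /= => /negP jSW; apply/negP => SW.
by apply: jSW; apply: monW SW; apply: subsetUr.
Qed.

Lemma yes_decisive_quarrel_setU2 (S : {set 'I_n}) :
  i \notin S -> j \notin S ->
  yes_decisive What i (i |: (j |: S)) -> yes_decisive W i (i |: (j |: S)).
Proof.
move=> iS jS; have [Uij _ _ Uj] := quarrel S iS jS.
have ijS : i \notin j |: S by rewrite !inE negb_or neq_ij.
rewrite /yes_decisive setU11 setU1K // Uij Uj /= => /andP[+ jSW].
rewrite (negbTE jSW) orbF => iSW; apply/andP; split => //.
by apply: monW iSW; rewrite setUCA; apply: subsetUr.
Qed.

Lemma yes_decisive_quarrel (P : {set 'I_n}) :
  yes_decisive What i P -> yes_decisive W i P.
Proof.
have [iP | /negbTE iP] := boolP (i \in P); last by rewrite /yes_decisive iP.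
rewrite -(setD1K iP); have iPi : i \notin P :\ i by rewrite !inE eqxx.
have [jP | jP] := boolP (j \in P :\ i).
- rewrite -(setD1K jP); apply: yes_decisive_quarrel_setU2.
    by rewrite !inE eqxx !andbF.
  by rewrite !inE eqxx.
- exact: yes_decisive_quarrel_setU1.
Qed.

End SymmetricWeakQuarrel.

Theorem theorem14 (n : nat) (W What : game n) (i j : 'I_n) :
  monotonic W -> i != j -> sym_weak_quarrel W What i j ->
  shapley_shubik What i <= shapley_shubik W i /\
  shapley_shubik What j <= shapley_shubik W j.
Proof.
move=> monW neq_ij quarrel.
have neq_ji : j != i by rewrite eq_sym.
split; apply: shapley_shubik_le.
- exact: yes_decisive_quarrel monW neq_ij quarrel.
- exact: yes_decisive_quarrel monW neq_ji (sym_weak_quarrelC quarrel).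
Qed.
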